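(* Let $N,n,m,p$ be positive integers, $A\in\mathbb{R}^{n\times n}$, $B\in\mathbb{R}^{n\times p}$, $C\in\mathbb{R}^{m\times n}$, $H\in\mathbb{R}^{n\times m}$, $W=[w_{ij}]\in\mathbb{R}^{N\times N}$ with $w_{ii}=0$ for all $i$, $\Delta=\mathrm{diag}(\delta_1,\dots,\delta_N)$ with $\delta_i\in\{0,1\}$, and $h>0$. Put $\mathcal{B}(h)=\int_0^h e^{A\tau}d\tau\,B$, $\mathcal{H}(h)=\int_0^h e^{A\tau}d\tau\,HC$, $\Phi_s=I_N\otimes e^{Ah}+W\otimes\mathcal{H}(h)$, $\Psi_s=\Delta\otimes\mathcal{B}(h)$. Let $\sigma(W)=\{\lambda_1,\dots,\lambda_r\}$ be the distinct eigenvalues of $W$ and $E_i=e^{Ah}+\lambda_i\mathcal{H}(h)$, and assume $0\notin\sigma(E_i)$ for every $i=1,\dots,r$. If the networked sampled-data system $X(k+1)=\Phi_sX(k)+\Psi_sU(k)$ is controllable, then the pair $(W,\Delta)$ is controllable and the pair $(E_i,\mathcal{B}(h))$ is controllable for every $i=1,\dots,r$.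
   Context: The networked sampled-data system is the discrete-time system $X(k+1)=\Phi_sX(k)+\Psi_sU(k)$; it is called controllable if every initial state can be steered to the origin in finitely many steps. For $F\in\mathbb{C}^{q\times q}$, $G\in\mathbb{C}^{q\times s}$, the pair $(F,G)$ is called controllable if $\mathrm{rank}[sI_q-F,\ G]=q$ for every $s\in\mathbb{C}$. $\sigma(\cdot)$ denotes the set of eigenvalues and $\otimes$ the Kronecker product. *)

From HB Require Import structures.
From mathcomp Require Import all_boot all_order all_algebra.
From mathcomp Require Import all_classical all_reals all_analysis.
From mathcomp Require Import complex mxtens.

Set Implicit Arguments.
Unset Strict Implicit.
Unset Printing Implicit Defensive.

Import Order.TTheory GRing.Theory Num.Theory.
Import numFieldNormedType.Exports.
Local Open Scope classical_set_scope.
Local Open Scope ring_scope.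

Section Defs.
Variable R : realType.

Definition expmx (n : nat) (A : 'M[R]_n) (t : R) : 'M[R]_n :=
  \matrix_(i, j) limn (series (fun k : nat => (A ^+ k) i j * t ^+ k / (k`!)%:R)).

(* int_0^h e^{A tau} d tau, entrywise Lebesgue (= Riemann) integral on [0,h]. *)
Definition int_expmx (n : nat) (A : 'M[R]_n) (h : R) : 'M[R]_n :=
  \matrix_(i, j) (\int[lebesgue_measure]_(tau in `[0, h]) (expmx A tau i j)).

Definition Bh (n p : nat) (A : 'M[R]_n) (B : 'M[R]_(n, p)) (h : R) :
  'M[R]_(n, p) := int_expmx A h *m B.

Definition Hh (n m : nat) (A : 'M[R]_n) (H : 'M[R]_(n, m)) (C : 'M[R]_(m, n))
  (h : R) : 'M[R]_n := int_expmx A h *m H *m C.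

Definition Phi_s (N n m : nat) (A : 'M[R]_n) (H : 'M[R]_(n, m))
  (C : 'M[R]_(m, n)) (W : 'M[R]_N) (h : R) : 'M[R]_(N * n) :=
  (1%:M : 'M[R]_N) *t expmx A h + W *t Hh A H C h.

Definition Psi_s (N n p : nat) (A : 'M[R]_n) (B : 'M[R]_(n, p))
  (Delta : 'M[R]_N) (h : R) : 'M[R]_(N * n, N * p) :=
  Delta *t Bh A B h.

Fixpoint dt_traj (q r : nat) (Phi : 'M[R]_q) (Psi : 'M[R]_(q, r))
  (X0 : 'cV[R]_q) (U : nat -> 'cV[R]_r) (k : nat) : 'cV[R]_q :=
  match k with
  | 0 => X0
  | k'.+1 => Phi *m dt_traj Phi Psi X0 U k' + Psi *m U k'
  end.

Definition dt_controllable (q r : nat) (Phi : 'M[R]_q) (Psi : 'M[R]_(q, r)) :=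
  forall X0 : 'cV[R]_q, exists (k : nat) (U : nat -> 'cV[R]_r),
    dt_traj Phi Psi X0 U k = 0.

Definition cmx (a b : nat) (M : 'M[R]_(a, b)) : 'M[R[i]]_(a, b) :=
  map_mx (fun x : R => (x%:C)%C) M.

End Defs.

Definition ctrb_pair (K : fieldType) (q s : nat) (F : 'M[K]_q) (G : 'M[K]_(q, s)) :=
  forall z : K, \rank (row_mx (z%:M - F) G) = q.

From HB Require Import structures.
From mathcomp Require Import all_boot all_order all_algebra.
From mathcomp Require Import all_classical all_reals all_analysis.
From mathcomp Require Import complex mxtens spectral.

(* Popov-Belevitch-Hautus argument. If (W, Delta) or (E_lam, B(h)) failed the
   rank test, there would be nonzero left eigenvectors w W = lam w and
   v E_lam = mu v (over C, E_lam always has one) with w Delta = 0 or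
   v B(h) = 0. Then w (x) v is a left
   eigenvector of Phi_s for mu, annihilated by Psi_s, and mu != 0 because
   E_lam is invertible. Along any trajectory, (w (x) v) X(k) = mu^k (w (x) v) X(0),
   so no initial state outside the kernel of w (x) v can be steered to 0. *)

Import Order.TTheory GRing.Theory Num.Theory.
Local Open Scope ring_scope.
Set Implicit Arguments.
Unset Strict Implicit.

Lemma ctrb_pair_left_eigen (K : fieldType) q s (F : 'M[K]_q) (G : 'M[K]_(q, s)) :
  (forall (z : K) (v : 'rV_q), v *m F = z *: v -> v *m G = 0 -> v = 0) ->
  ctrb_pair F G.
Proof.
move=> left_eigen_eq0 z; apply/eqP/inj_row_free => v.
rewrite mul_mx_row -row_mx0 => /eq_row_mx [/eqP vF vG].
apply: left_eigen_eq0 vG.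
by move: vF; rewrite mulmxBr mul_mx_scalar subr_eq0 => /eqP <-.
Qed.

Section Kronecker.
Variable K : comPzRingType.

Lemma tensmxDr a b c d (A : 'M[K]_(a, b)) (B D : 'M[K]_(c, d)) :
  A *t (B + D) = A *t B + A *t D.
Proof. by apply/matrixP => i j; rewrite !mxE mulrDr. Qed.

Lemma tensmxZl a b c d (k : K) (A : 'M[K]_(a, b)) (D : 'M[K]_(c, d)) :
  (k *: A) *t D = k *: (A *t D).
Proof. by apply/matrixP => i j; rewrite !mxE -mulrA. Qed.

Lemma tensmxZr a b c d (k : K) (A : 'M[K]_(a, b)) (D : 'M[K]_(c, d)) :
  A *t (k *: D) = k *: (A *t D).
Proof. by apply/matrixP => i j; rewrite !mxE mulrCA. Qed.

Lemma tensmx_left_eigen N n (W : 'M[K]_N) (E F : 'M[K]_n)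
    (w : 'rV_N) (v : 'rV_n) (lam mu : K) :
  w *m W = lam *: w -> v *m (E + lam *: F) = mu *: v ->
  (w *t v) *m (1%:M *t E + W *t F) = mu *: (w *t v).
Proof.
move=> wW vE; rewrite mulmxDr !tensmx_mul mulmx1 wW tensmxZl -tensmxZr.
by rewrite -tensmxDr scalemxAr -mulmxDr vE tensmxZr.
Qed.

End Kronecker.

Lemma tensmx_eq0 (K : idomainType) a b c d (A : 'M[K]_(a, b)) (D : 'M[K]_(c, d)) :
  (A *t D == 0) = (A == 0) || (D == 0).
Proof.
have [->|/matrix0Pn [i [j Aij]]] := eqVneq A 0; first by rewrite tens0mx eqxx.
have [->|/matrix0Pn [k [l Dkl]]] := eqVneq D 0; first by rewrite tensmx0 eqxx.
apply/negP => /eqP /matrixP /(_ (mxtens_index (i, k)) (mxtens_index (j, l))).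
by rewrite tensmxE mxE => /eqP; rewrite mulf_eq0 (negbTE Aij) (negbTE Dkl).
Qed.

Section DiscreteTime.
Variable R : realType.

Lemma cmxE a b (M : 'M[R]_(a, b)) : cmx M = map_mx (real_complex R) M.
Proof. by []. Qed.

Lemma dt_traj_left_eigen q r (Phi : 'M[R]_q) (Psi : 'M[R]_(q, r))
    k (x : 'M[R[i]]_(k, q)) (mu : R[i]) X0 U t :
  x *m cmx Phi = mu *: x -> x *m cmx Psi = 0 ->
  x *m cmx (dt_traj Phi Psi X0 U t) = mu ^+ t *: (x *m cmx X0).
Proof.
move=> xPhi xPsi; elim: t => [|t IHt] /=; first by rewrite expr0 scale1r.
rewrite !cmxE map_mxD !map_mxM mulmxDr !mulmxA -!cmxE xPhi xPsi mul0mx addr0.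
by rewrite -scalemxAl IHt scalerA exprSr mulrC.
Qed.

Lemma dt_controllable_left_eigen_eq0 q r (Phi : 'M[R]_q) (Psi : 'M[R]_(q, r))
    k (x : 'M[R[i]]_(k, q)) (mu : R[i]) :
  dt_controllable Phi Psi -> mu != 0 ->
  x *m cmx Phi = mu *: x -> x *m cmx Psi = 0 -> x = 0.
Proof.
move=> ctrl mu_neq0 xPhi xPsi; apply/matrixP => i j; rewrite mxE.
have [t [U traj0]] := ctrl (delta_mx j 0).
have := dt_traj_left_eigen (delta_mx j 0) U t xPhi xPsi.
rewrite traj0 cmxE map_mx0 mulmx0 cmxE map_delta_mx -colE => /esym/eqP.
rewrite scalemx_eq0 expf_eq0 (negbTE mu_neq0) andbF => /eqP/matrixP/(_ i 0).
by rewrite !mxE.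
Qed.

Lemma network_left_eigen_eq0 N n m p
    (A : 'M[R]_n) (B : 'M[R]_(n, p)) (C : 'M[R]_(m, n)) (H : 'M[R]_(n, m))
    (W Delta : 'M[R]_N) (h : R) (lam mu : R[i]) (w : 'rV_N) (v : 'rV_n) :
  dt_controllable (Phi_s A H C W h) (Psi_s A B Delta h) -> mu != 0 ->
  w *m cmx W = lam *: w ->
  v *m (cmx (expmx A h) + lam *: cmx (Hh A H C h)) = mu *: v ->
  w *m cmx Delta = 0 \/ v *m cmx (Bh A B h) = 0 ->
  w = 0 \/ v = 0.
Proof.
move=> ctrl mu_neq0 wW vE input0.
suff /eqP : w *t v = 0 by rewrite tensmx_eq0 => /orP [] /eqP; [left | right].
apply: (dt_controllable_left_eigen_eq0 ctrl mu_neq0).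
  rewrite /Phi_s cmxE map_mxD !map_mxT map_mx1 -!cmxE.
  exact: tensmx_left_eigen wW vE.
rewrite /Psi_s cmxE map_mxT -!cmxE tensmx_mul.
by case: input0 => ->; rewrite ?tens0mx ?tensmx0.
Qed.

End DiscreteTime.

Theorem corollary2 (R : realType) (N n m p : nat)
  (A : 'M[R]_n) (B : 'M[R]_(n, p)) (C : 'M[R]_(m, n)) (H : 'M[R]_(n, m))
  (W : 'M[R]_N) (delta : 'rV[R]_N) (h : R) :
  (0 < N)%N -> (0 < n)%N -> (0 < m)%N -> (0 < p)%N ->
  (forall i : 'I_N, W i i = 0) ->
  (forall i : 'I_N, delta 0 i = 0 \/ delta 0 i = 1) ->
  0 < h ->
  (forall lam : R[i], eigenvalue (cmx W) lam ->
     ~ eigenvalue (cmx (expmx A h) + lam *: cmx (Hh A H C h)) 0) ->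
  dt_controllable (Phi_s A H C W h) (Psi_s A B (diag_mx delta) h) ->
  ctrb_pair (cmx W) (cmx (diag_mx delta)) /\
  (forall lam : R[i], eigenvalue (cmx W) lam ->
     ctrb_pair (cmx (expmx A h) + lam *: cmx (Hh A H C h)) (cmx (Bh A B h))).
Proof.
move=> _ n_gt0 _ _ _ _ _ E_invertible ctrl.
have eigen_neq0 (lam mu : R[i]) (v : 'rV_n) : eigenvalue (cmx W) lam -> v != 0 ->
    v *m (cmx (expmx A h) + lam *: cmx (Hh A H C h)) = mu *: v -> mu != 0.
  move=> Wlam v_neq0 vE; apply: contra_notN (E_invertible lam Wlam) => /eqP mu0.
  by apply/eigenvalueP; exists v; rewrite // -mu0.
split.
  apply: ctrb_pair_left_eigen => z w wW wDelta.
  have [//|w_neq0] := eqVneq w 0.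
  have Wz : eigenvalue (cmx W) z by apply/eigenvalueP; exists w.
  have [mu /eigenvalueP [v vE v_neq0]] := eigenvalue_closed
    (cmx (expmx A h) + z *: cmx (Hh A H C h)) n_gt0.
  have [//|v0] := network_left_eigen_eq0 ctrl (eigen_neq0 _ _ _ Wz v_neq0 vE)
    wW vE (or_introl wDelta).
  by rewrite v0 eqxx in v_neq0.
move=> lam Wlam; apply: ctrb_pair_left_eigen => z v vE vB.
have [//|v_neq0] := eqVneq v 0.
have [w wW w_neq0] := eigenvalueP Wlam.
have [w0|//] := network_left_eigen_eq0 ctrl (eigen_neq0 _ _ _ Wlam v_neq0 vE)
  wW vE (or_intror vB).
by rewrite w0 eqxx in w_neq0.
Qed.
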